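(* Let $p,n\in\mathbb{N}$ with $p,n\ge1$, and $r\in\mathbb{N}$ with $r\le p$, and assume $n\ge\max\{p+1,\;p+\lfloor p/2\rfloor-1\}$. Then $$X^{p,r,0}=(n+1)^{2r-1}\big(T_n^{\bm\alpha}-H_n^{\bm\alpha,2}\big),$$ where $\bm\alpha=(\alpha_0,\dots,\alpha_p)$ is given by $\alpha_k=(-1)^r\mathcal{N}_{2p+1}^{(2r)}(p+1-k)$, $k=0,\dots,p$.
   Context: Cardinal B-spline: $\mathcal{N}_0(t)=1$ for $t\in[0,1)$, $0$ otherwise; $\mathcal{N}_p(t)=\frac{t}{p}\mathcal{N}_{p-1}(t)+\frac{p+1-t}{p}\mathcal{N}_{p-1}(t-1)$, $p\ge1$ (support $[0,p+1]$, piecewise polynomial with integer breakpoints, $C^{p-1}$); $\mathcal{N}_{2p+1}\in C^{2p}$ so $\mathcal{N}_{2p+1}^{(2r)}$ is defined for $r\le p$. Dirichlet basis: for $c\in\mathbb{R}$ put $B^{D}_c(x)=\mathcal{N}_p\big((n+1)x-c+\tfrac{p+1}{2}\big)$ and for $i=1,\dots,n$, $x\in[0,1]$, $N^p_{i,0}(x)=\sum_{m\in\mathbb{Z}}\big(B^{D}_{i+2m(n+1)}(x)-B^{D}_{-i+2m(n+1)}(x)\big)$. $X^{p,r,0}_{i,j}=\int_0^1 (N^p_{i,0})^{(r)}(N^p_{j,0})^{(r)}\,\mathrm{d}x$ ($r=0$ gives the mass matrix, $r=1$ the stiffness matrix). For $\bm\alpha\in\mathbb{R}^{p+1}$ and $n\ge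 p+1$, with the convention $\alpha_k=0$ for $k>p$: $T_n^{\bm\alpha}$ is the $n\times n$ symmetric banded Toeplitz matrix with $(T_n^{\bm\alpha})_{i,j}=\alpha_{|i-j|}$; $H_n^{\bm\alpha,2}$ is the $n\times n$ Hankel-type matrix with $(H_n^{\bm\alpha,2})_{i,j}=\alpha_{i+j}+\alpha_{2n+2-i-j}$. *)

From Stdlib Require Import Reals Lra Lia ZArith Arith.
From Coquelicot Require Import Coquelicot.
Open Scope R_scope.

Fixpoint cardN (p : nat) (t : R) : R :=
  match p with
  | O => if Rle_dec 0 t then (if Rlt_dec t 1 then 1 else 0) else 0
  | S q => t / INR (S q) * cardN q t
           + (INR (S q) + 1 - t) / INR (S q) * cardN q (t - 1)
  end.

(* Sum over m in Z of f m, written as the series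
   sum_{k>=0} (f k + f (-k-1)).  In our use only finitely many terms are
   nonzero, so this is the plain (finite) sum over Z. *)
Definition sumZ (f : Z -> R) : R :=
  Series (fun k : nat => f (Z.of_nat k) + f (- Z.of_nat k - 1)%Z).

Definition BD (p n : nat) (c : R) (x : R) : R :=
  cardN p ((INR n + 1) * x - c + (INR p + 1) / 2).

Definition NDir (p n i : nat) (x : R) : R :=
  sumZ (fun m : Z =>
          BD p n (INR i + 2 * IZR m * (INR n + 1)) x
          - BD p n (- INR i + 2 * IZR m * (INR n + 1)) x).

Definition Xmat (p r n i j : nat) : R :=
  RInt (fun x => Derive_n (NDir p n i) r x * Derive_n (NDir p n j) r x) 0 1.

Definition alpha (p r k : nat) : R :=
  if Nat.leb k p
  then (-1) ^ r * Derive_n (cardN (2 * p + 1)) (2 * r) (INR (p + 1) - INR k)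
  else 0.

(* (T_n^alpha)_{i,j} = alpha_{|i-j|} *)
Definition Tmat (p r i j : nat) : R := alpha p r ((i - j) + (j - i))%nat.

Definition Hmat (p r n i j : nat) : R :=
  alpha p r (i + j) + alpha p r (2 * n + 2 - i - j).

From Stdlib Require Import Reals Lra Lia ZArith Arith List.
From Coquelicot Require Import Coquelicot.
Open Scope R_scope.

(* [N_p] is the [(p+1)]-st backward difference of the truncated power
   [t_+^p / p!], so its derivatives are differences of lower truncated powers,
   and on [(0,1)] the Dirichlet function [N^p_{i,0}] only involves the
   translates [c = i, -i, 2(n+1) - i].  Through the Beta integral, the product
   of two such differences integrates to a [(2p+2)]-nd difference, that is to
   a value of [N_{2p+1}^{(2r)}].  The reflection [N_p(p+1-t) = N_p(t)] folds
   the nine cross terms of a Gram entry into autocorrelations over [[-1,2]],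
   [[-1,1]] and [[0,2]], giving the Toeplitz entry [alpha_{|i-j|}] and the
   Hankel entries [alpha_{i+j}], [alpha_{2n+2-i-j}].  For [r = p] the
   derivatives are only piecewise defined, so everything is done off the
   finite grid of breakpoints. *)

(** * Truncated powers and backward differences *)

(* Normalised truncated powers [u_+^m / m!]; the two versions differ only at
   [u = 0] for [m = 0], and reflection [u |-> -u] exchanges them. *)
Definition tpow (m : nat) (u : R) : R :=
  if Rle_dec 0 u then u ^ m / INR (fact m) else 0.

Definition tpow_open (m : nat) (u : R) : R :=
  if Rlt_dec 0 u then u ^ m / INR (fact m) else 0.

Lemma tpow_opp m s :
  tpow m (- s) = (-1) ^ m * (s ^ m / INR (fact m) - tpow_open m s).
Proof.
  unfold tpow, tpow_open.
  destruct (Rle_dec 0 (- s)), (Rlt_dec 0 s); try lra.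
  replace (- s) with (-1 * s) by ring. rewrite Rpow_mult_distr. unfold Rdiv; ring.
Qed.

Lemma tpow_open_eq m u : u <> 0 -> tpow_open m u = tpow m u.
Proof.
  intros Hu. unfold tpow, tpow_open.
  destruct (Rlt_dec 0 u), (Rle_dec 0 u); auto; lra.
Qed.

Lemma tpow_lt0 m u : u < 0 -> tpow m u = 0.
Proof. intros Hu. unfold tpow. destruct (Rle_dec 0 u); [lra | reflexivity]. Qed.

Lemma tpow_le0 m u : (1 <= m)%nat -> u <= 0 -> tpow m u = 0.
Proof.
  intros Hm Hu. unfold tpow. destruct (Rle_dec 0 u); [|reflexivity].
  replace u with 0 by lra. rewrite pow_i by lia. unfold Rdiv; ring.
Qed.

Lemma tpow_open_le0 m u : u <= 0 -> tpow_open m u = 0.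
Proof. intros Hu. unfold tpow_open. destruct (Rlt_dec 0 u); [lra | reflexivity]. Qed.

Lemma Rmult_tpow m u : u * tpow m u = INR (S m) * tpow (S m) u.
Proof.
  unfold tpow. rewrite fact_simpl, mult_INR.
  pose proof (INR_fact_lt_0 m). pose proof (pos_INR m). rewrite S_INR.
  destruct (Rle_dec 0 u); simpl; field; lra.
Qed.

Lemma derivable_pt_lim_tpow_0 m : derivable_pt_lim (tpow (S (S m))) 0 0.
Proof.
  intros eps Heps.
  assert (Hd : 0 < Rmin 1 eps) by (apply Rmin_glb_lt; lra).
  exists (mkposreal _ Hd). intros h Hh0 Hh. simpl in Hh.
  pose proof (Rmin_l 1 eps). pose proof (Rmin_r 1 eps).
  apply Rabs_def2 in Hh.
  rewrite Rplus_0_l, (tpow_le0 _ 0) by (lia || lra). unfold tpow.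
  destruct (Rle_dec 0 h).
  - assert (Hf : 1 <= INR (fact (S (S m)))) by (apply (le_INR 1), lt_O_fact).
    assert (Hp : 0 <= h ^ m <= 1).
    { split; [apply pow_le; lra|]. rewrite <- (pow1 m). apply pow_incr. lra. }
    replace ((h ^ S (S m) / INR (fact (S (S m))) - 0) / h - 0)
      with (h * h ^ m / INR (fact (S (S m))))
      by (change (h ^ S (S m)) with (h * (h * h ^ m)); field; split; lra).
    rewrite Rabs_right.
    + apply (Rle_lt_trans _ (h * h ^ m)); [|nra].
      unfold Rdiv. rewrite <- (Rmult_1_r (h * h ^ m)) at 2.
      apply Rmult_le_compat_l; [nra|]. rewrite <- Rinv_1. apply Rinv_le_contravar; lra.
    + apply Rle_ge, Rmult_le_pos; [nra | apply Rlt_le, Rinv_0_lt_compat; lra].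
  - replace ((0 - 0) / h - 0) with 0 by (field; auto). rewrite Rabs_R0. lra.
Qed.

Lemma is_derive_pow_fact m u :
  is_derive (fun y => y ^ S m / INR (fact (S m))) u (u ^ m / INR (fact m)).
Proof.
  pose proof (INR_fact_lt_0 m). pose proof (pos_INR m).
  auto_derive; [exact I|].
  change (match m with 0%nat => 1 | S _ => INR m + 1 end) with (INR (S m)).
  change (fact m + m * fact m)%nat with (fact (S m)).
  rewrite fact_simpl, mult_INR, S_INR. field. lra.
Qed.

Lemma is_derive_tpow m u :
  (1 <= m)%nat \/ u <> 0 -> is_derive (tpow (S m)) u (tpow m u).
Proof.
  intros Hc.
  destruct (Rlt_dec 0 u) as [Hp|Hp]; [|destruct (Rlt_dec u 0) as [Hn|Hn]].
  - apply (is_derive_ext_loc (fun y => y ^ S m / INR (fact (S m)))).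
    + apply (locally_open (fun y => 0 < y)); [apply open_gt | | exact Hp].
      intros y Hy. unfold tpow. destruct (Rle_dec 0 y); [reflexivity | lra].
    + unfold tpow. destruct (Rle_dec 0 u); [apply is_derive_pow_fact | lra].
  - apply (is_derive_ext_loc (fun _ => 0)).
    + apply (locally_open (fun y => y < 0)); [apply open_lt | | exact Hn].
      intros y Hy. rewrite tpow_lt0 by exact Hy. reflexivity.
    + rewrite tpow_lt0 by exact Hn. apply (is_derive_const (K := R_AbsRing) 0).
  - replace u with 0 in * by lra. destruct Hc as [Hm|Hu]; [|lra].
    destruct m as [|m]; [lia|]. rewrite tpow_le0 by (lia || lra).
    apply is_derive_Reals, derivable_pt_lim_tpow_0.
Qed.

Fixpoint bdiff (q : nat) (f : R -> R) (t : R) : R :=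
  match q with
  | O => f t
  | S q' => bdiff q' f t - bdiff q' f (t - 1)
  end.

Lemma bdiff_ext q f h t :
  (forall k, (k <= q)%nat -> f (t - INR k) = h (t - INR k)) ->
  bdiff q f t = bdiff q h t.
Proof.
  revert t; induction q as [|q IH]; intros t H; simpl.
  - specialize (H O (le_n _)). rewrite Rminus_0_r in H. exact H.
  - rewrite (IH t), (IH (t - 1)); [reflexivity| |].
    + intros k Hk. replace (t - 1 - INR k) with (t - INR (S k)) by (rewrite S_INR; ring).
      apply H; lia.
    + intros k Hk. apply H; lia.
Qed.

Lemma bdiff_lin q f h a b t :
  bdiff q (fun s => a * f s + b * h s) t = a * bdiff q f t + b * bdiff q h t.
Proof. revert t; induction q; intros t; simpl; [reflexivity|]. rewrite !IHq; ring. Qed.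

Lemma bdiff_scal q f a t : bdiff q (fun s => a * f s) t = a * bdiff q f t.
Proof. revert t; induction q; intros t; simpl; [reflexivity|]. rewrite !IHq; ring. Qed.

Lemma bdiff_shift q f c t : bdiff q (fun s => f (s + c)) t = bdiff q f (t + c).
Proof.
  revert t; induction q; intros t; simpl; [reflexivity|].
  rewrite !IHq. replace (t - 1 + c) with (t + c - 1) by ring. reflexivity.
Qed.

Lemma bdiff_bdiff q q' f t : bdiff q (bdiff q' f) t = bdiff (q + q') f t.
Proof. revert t; induction q; intros t; simpl; [reflexivity|]. rewrite !IHq; reflexivity. Qed.

Lemma bdiff_const q c t : bdiff (S q) (fun _ => c) t = 0.
Proof. revert t; induction q; intros t; simpl in *; [ring|]. rewrite !IHq; ring. Qed.

Lemma bdiff_mul_id q h t :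
  bdiff q (fun s => s * h s) t = t * bdiff q h t + INR q * bdiff (pred q) h (t - 1).
Proof.
  revert t; induction q as [|q IH]; intros t; simpl; [ring|].
  rewrite !IH. destruct q; simpl; [ring|].
  rewrite ?S_INR. replace (t - 1 - 1) with (t - 2) by ring. ring.
Qed.

Lemma bdiff_pow m q t : (m < q)%nat -> bdiff q (fun s => s ^ m) t = 0.
Proof.
  revert q t; induction m as [|m IH]; intros q t Hq.
  - destruct q as [|q]; [lia|]. exact (bdiff_const q 1 t).
  - simpl. rewrite bdiff_mul_id, IH by lia. destruct q as [|q]; [lia|]. simpl pred.
    rewrite IH by lia. ring.
Qed.

Lemma bdiff_reflect q f t :
  bdiff q f t = (-1) ^ q * bdiff q (fun s => f (- s)) (INR q - t).
Proof.
  revert t; induction q as [|q IH]; intros t.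
  - simpl. rewrite Rminus_0_l, Ropp_involutive. ring.
  - cbn [bdiff pow]. rewrite !IH, S_INR.
    replace (INR q + 1 - t - 1) with (INR q - t) by ring.
    replace (INR q - (t - 1)) with (INR q + 1 - t) by ring. ring.
Qed.

(* [bdiff q] annihilates polynomials of degree [< q], so reflecting [u_+^m]
   only exchanges the two conventions at 0. *)
Lemma bdiff_tpow_reflect q m u : (m < q)%nat ->
  bdiff q (tpow m) u = (-1) ^ (q + m + 1) * bdiff q (tpow_open m) (INR q - u).
Proof.
  intros Hm. rewrite bdiff_reflect.
  rewrite (bdiff_ext q _
    (fun s => (-1) ^ m / INR (fact m) * s ^ m + - (-1) ^ m * tpow_open m s))
    by (intros; rewrite tpow_opp; unfold Rdiv; ring).
  rewrite bdiff_lin, bdiff_pow by exact Hm. rewrite !pow_add. ring.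
Qed.

Lemma bdiff_zero q f t :
  (forall k, (k <= q)%nat -> f (t - INR k) = 0) -> bdiff q f t = 0.
Proof.
  intros H. rewrite (bdiff_ext q f (fun _ => 0 * 0)) by (intros; rewrite H; [ring | lia]).
  rewrite bdiff_scal. ring.
Qed.

(** * Cardinal B-splines as differences of truncated powers *)

(* [spline_diff p m] is the derivative of order [p - m] of [cardN p]. *)
Definition spline_diff (p m : nat) : R -> R := bdiff (S p) (tpow m).

Lemma cardN_bdiff p t : cardN p t = spline_diff p p t.
Proof.
  unfold spline_diff. revert t; induction p as [|p IH]; intros t.
  - simpl. unfold tpow. simpl.
    destruct (Rle_dec 0 t), (Rlt_dec t 1), (Rle_dec 0 (t - 1)); lra.
  - assert (L : forall u, bdiff (S p) (fun s => s * tpow p s) u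
                         = INR (S p) * bdiff (S p) (tpow (S p)) u).
    { intros u. rewrite <- bdiff_scal. apply bdiff_ext. intros; apply Rmult_tpow. }
    pose proof (L t) as L1. pose proof (L (t - 1)) as L2.
    rewrite bdiff_mul_id in L1, L2. simpl pred in L1, L2.
    assert (HP : INR (S p) <> 0) by (apply not_0_INR; lia).
    cbn [cardN]. rewrite !IH.
    change (bdiff (S (S p)) (tpow (S p)) t)
      with (bdiff (S p) (tpow (S p)) t - bdiff (S p) (tpow (S p)) (t - 1)).
    apply (Rmult_eq_reg_l (INR (S p))); [|exact HP].
    rewrite Rmult_minus_distr_l, <- L1, <- L2. cbn [bdiff].
    replace (t - 1 - 1) with (t - 2) by ring. rewrite S_INR in *. field. lra.
Qed.

Lemma spline_diff_reflect p m u : (m <= p)%nat -> (forall z : Z, u <> IZR z) ->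
  spline_diff p m (INR (S p) - u) = (-1) ^ (p + m) * spline_diff p m u.
Proof.
  intros Hm Hu. unfold spline_diff. rewrite bdiff_tpow_reflect by lia.
  replace (INR (S p) - (INR (S p) - u)) with u by ring.
  rewrite (bdiff_ext _ (tpow_open m) (tpow m)).
  - replace (S p + m + 1)%nat with (p + m + 2)%nat by lia. rewrite pow_add. simpl. ring.
  - intros k _. apply tpow_open_eq. intros E.
    apply (Hu (Z.of_nat k)). rewrite <- INR_IZR_INZ. lra.
Qed.

Lemma spline_diff_out p m u : (m <= p)%nat -> u < 0 \/ INR (S p) <= u ->
  spline_diff p m u = 0.
Proof.
  intros Hm [Hu|Hu]; unfold spline_diff.
  - apply bdiff_zero. intros k _. apply tpow_lt0. pose proof (pos_INR k). lra.
  - rewrite bdiff_tpow_reflect by lia. rewrite bdiff_zero; [ring|].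
    intros k _. apply tpow_open_le0. pose proof (pos_INR k). lra.
Qed.

Lemma spline_diff_le0 p m u : (1 <= m)%nat -> u <= 0 -> spline_diff p m u = 0.
Proof.
  intros Hm Hu. apply bdiff_zero. intros k _. apply tpow_le0; [exact Hm|].
  pose proof (pos_INR k). lra.
Qed.

Lemma is_derive_bdiff_affine (f f' : R -> R) q lam beta x :
  (forall k, (k <= q)%nat ->
     is_derive f (lam * x + beta - INR k) (f' (lam * x + beta - INR k))) ->
  is_derive (fun y => bdiff q f (lam * y + beta)) x (lam * bdiff q f' (lam * x + beta)).
Proof.
  revert beta; induction q as [|q IH]; intros beta H.
  - specialize (H O (le_n _)). simpl in H |- *. rewrite Rminus_0_r in H.
    apply (is_derive_comp f (fun y => lam * y + beta)); [exact H|].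
    auto_derive; [exact I | ring].
  - cbn [bdiff].
    apply (is_derive_ext
             (fun y => bdiff q f (lam * y + beta) - bdiff q f (lam * y + (beta - 1)))).
    { intros t. replace (lam * t + (beta - 1)) with (lam * t + beta - 1) by ring. reflexivity. }
    replace (lam * x + beta - 1) with (lam * x + (beta - 1)) by ring.
    rewrite Rmult_minus_distr_l.
    apply (is_derive_minus (fun y => bdiff q f (lam * y + beta))); apply IH.
    + intros k Hk. apply H. lia.
    + intros k Hk. replace (lam * x + (beta - 1) - INR k) with (lam * x + beta - INR (S k))
        by (rewrite S_INR; ring).
      apply H. lia.
Qed.

Lemma is_derive_spline_diff p m lam beta x :
  (1 <= m)%nat \/ (forall z : Z, lam * x + beta <> IZR z) ->
  is_derive (fun y => spline_diff p (S m) (lam * y + beta)) x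
    (lam * spline_diff p m (lam * x + beta)).
Proof.
  intros Hc. apply is_derive_bdiff_affine. intros k _. apply is_derive_tpow.
  destruct Hc as [Hc|Hc]; [left; exact Hc | right].
  intros E. apply (Hc (Z.of_nat k)). rewrite <- INR_IZR_INZ. lra.
Qed.

Lemma Derive_n_chain (f : R -> R) (F : nat -> R -> R) K :
  (forall y, f y = F O y) ->
  (forall k y, (k < K)%nat -> is_derive (F k) y (F (S k) y)) ->
  forall k y, (k <= K)%nat -> Derive_n f k y = F k y.
Proof.
  intros H0 HS k. induction k as [|k IH]; intros y Hk; simpl; [apply H0|].
  rewrite (Derive_ext _ (F k)) by (intros; apply IH; lia).
  apply is_derive_unique, HS. lia.
Qed.

Lemma Derive_n_cardN p k y : (k < p)%nat ->
  Derive_n (cardN p) k y = spline_diff p (p - k) y.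
Proof.
  intros Hk. apply (Derive_n_chain _ (fun k => spline_diff p (p - k)) (p - 1)); [| |lia].
  - intros. rewrite cardN_bdiff, Nat.sub_0_r. reflexivity.
  - intros j t Hj. replace (p - j)%nat with (S (p - S j)) by lia.
    apply (is_derive_ext (fun y => spline_diff p (S (p - S j)) (1 * y + 0)));
      [intros; f_equal; ring|].
    replace (spline_diff p (p - S j) t) with (1 * spline_diff p (p - S j) (1 * t + 0))
      by (rewrite !Rmult_1_l, Rplus_0_r; reflexivity).
    apply is_derive_spline_diff. left. lia.
Qed.

(** * Riemann integrals *)

(* Versions of Coquelicot's lemmas with values typed in [R] rather than in a
   normed module, so that [ring] and [field] apply to the results. *)
Lemma is_RInt_Rplus (f g : R -> R) a b (If Ig : R) :
  is_RInt f a b If -> is_RInt g a b Ig -> is_RInt (fun x => f x + g x) a b (If + Ig).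
Proof. exact (is_RInt_plus f g a b If Ig). Qed.

Lemma is_RInt_Rminus (f g : R -> R) a b (If Ig : R) :
  is_RInt f a b If -> is_RInt g a b Ig -> is_RInt (fun x => f x - g x) a b (If - Ig).
Proof. exact (is_RInt_minus f g a b If Ig). Qed.

Lemma is_RInt_Rmult_l (f : R -> R) a b k (If : R) :
  is_RInt f a b If -> is_RInt (fun x => k * f x) a b (k * If).
Proof. exact (is_RInt_scal f a b k If). Qed.

Lemma is_RInt_Rchasles (f : R -> R) a b c (I1 I2 : R) :
  is_RInt f a b I1 -> is_RInt f b c I2 -> is_RInt f a c (I1 + I2).
Proof. exact (is_RInt_Chasles f a b c I1 I2). Qed.

Lemma is_RInt_Rext (f g : R -> R) a b (l : R) : a <= b ->
  (forall x, a < x < b -> f x = g x) -> is_RInt f a b l -> is_RInt g a b l.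
Proof.
  intros Hab H. apply is_RInt_ext. intros x Hx.
  rewrite Rmin_left, Rmax_right in Hx by exact Hab. auto.
Qed.

Lemma is_RInt_eq0 (f : R -> R) a b : a <= b ->
  (forall x, a < x < b -> f x = 0) -> is_RInt f a b 0.
Proof.
  intros Hab H. apply (is_RInt_Rext (fun _ => 0)); [exact Hab | intros; symmetry; auto|].
  pose proof (is_RInt_const (V := R_NormedModule) a b 0) as Hc.
  change (scal (b - a) (0 : R)) with ((b - a) * 0) in Hc.
  rewrite Rmult_0_r in Hc. exact Hc.
Qed.

Lemma is_RInt_split (f : R -> R) a b c (l : R) : a <= c <= b -> is_RInt f a b l ->
  exists l1 l2, is_RInt f a c l1 /\ is_RInt f c b l2 /\ l = l1 + l2.
Proof.
  intros Hc H.
  assert (E1 : ex_RInt f a c) by (apply (ex_RInt_Chasles_1 f a c b); [lra | exists l; exact H]).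
  assert (E2 : ex_RInt f c b) by (apply (ex_RInt_Chasles_2 f a c b); [lra | exists l; exact H]).
  exists (RInt f a c), (RInt f c b).
  split; [exact (RInt_correct f a c E1)|]. split; [exact (RInt_correct f c b E2)|].
  apply (is_RInt_unique f a b l) in H. rewrite <- H.
  apply (is_RInt_unique f a b), (is_RInt_Rchasles f a c b); apply (RInt_correct f); assumption.
Qed.

Lemma is_RInt_except_point (f g : R -> R) a b c (l : R) : a <= b ->
  (forall x, a < x < b -> x <> c -> g x = f x) -> is_RInt f a b l -> is_RInt g a b l.
Proof.
  intros Hab Hg H.
  assert (Hext : forall a' b', a <= a' <= b' -> b' <= b ->
            (c <= a' \/ b' <= c) -> forall l', is_RInt f a' b' l' -> is_RInt g a' b' l').
  { intros a' b' Ha' Hb' Hc l' H'. apply (is_RInt_Rext f); [lra | | exact H'].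
    intros x Hx. symmetry; apply Hg; lra. }
  destruct (Rlt_dec a c) as [H1|H1]; [destruct (Rlt_dec c b) as [H2|H2]|].
  - destruct (is_RInt_split f a b c l) as [l1 [l2 [I1 [I2 ->]]]]; [lra | exact H|].
    apply (is_RInt_Rchasles g a c b); apply Hext; auto; lra.
  - apply Hext; auto; lra.
  - apply Hext; auto; lra.
Qed.

Lemma is_RInt_except (L : list R) (f g : R -> R) a b (l : R) : a <= b ->
  (forall x, a < x < b -> ~ In x L -> g x = f x) -> is_RInt f a b l -> is_RInt g a b l.
Proof.
  revert g; induction L as [|c L IH]; intros g Hab Hg H.
  - apply (is_RInt_Rext f); [exact Hab | | exact H].
    intros x Hx. symmetry; apply Hg; auto.
  - apply (is_RInt_except_point (fun x => if Req_EM_T x c then f x else g x) g a b c l Hab).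
    { intros x _ Hxc. destruct (Req_EM_T x c); [contradiction | reflexivity]. }
    apply IH; [exact Hab | | exact H].
    intros x Hx Hn. destruct (Req_EM_T x c); [reflexivity|].
    apply Hg; [exact Hx|]. intros [E|E]; [congruence | contradiction].
Qed.

Lemma is_RInt_reflect (f : R -> R) a b c (l : R) :
  is_RInt f a b l -> is_RInt (fun x => f (c - x)) (c - b) (c - a) l.
Proof.
  intros H. apply is_RInt_swap in H.
  replace a with (-1 * (c - a) + c) in H by ring.
  replace b with (-1 * (c - b) + c) in H by ring.
  apply is_RInt_comp_lin, (is_RInt_Rmult_l _ _ _ (-1)) in H.
  change (opp l) with (- l) in H. replace (-1 * - l) with l in H by ring.
  eapply is_RInt_ext; [|exact H].
  intros x _. cbv beta. change (scal (-1) (f (-1 * x + c))) with (-1 * f (-1 * x + c)).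
  replace (-1 * x + c) with (c - x) by ring.
  rewrite <- Rmult_assoc. replace (-1 * -1) with 1 by ring. exact (Rmult_1_l _).
Qed.

Lemma is_RInt_fold_opp (f : R -> R) (l : R) :
  is_RInt f (-1) 0 l -> is_RInt (fun x => f (- x)) 0 1 l.
Proof.
  intros H. apply (is_RInt_reflect f _ _ 0) in H.
  replace (0 - 0) with 0 in H by ring. replace (0 - -1) with 1 in H by ring.
  apply (is_RInt_Rext _ _ 0 1 _ ltac:(lra)) with (2 := H).
  intros x _. rewrite Rminus_0_l. reflexivity.
Qed.

Lemma is_RInt_fold_right (f : R -> R) (l : R) :
  is_RInt f 0 2 l -> is_RInt (fun x => f x + f (2 - x)) 0 1 l.
Proof.
  intros H. destruct (is_RInt_split f 0 2 1 l) as [l1 [l2 [H1 [H2 ->]]]]; [lra | exact H|].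
  apply (is_RInt_reflect f _ _ 2) in H2.
  replace (2 - 2) with 0 in H2 by ring. replace (2 - 1) with 1 in H2 by ring.
  exact (is_RInt_Rplus _ _ _ _ _ _ H1 H2).
Qed.

Lemma is_RInt_fold_left (f : R -> R) (l : R) :
  is_RInt f (-1) 1 l -> is_RInt (fun x => f x + f (- x)) 0 1 l.
Proof.
  intros H. destruct (is_RInt_split f (-1) 1 0 l) as [l1 [l2 [H1 [H2 ->]]]]; [lra | exact H|].
  rewrite Rplus_comm. exact (is_RInt_Rplus _ _ _ _ _ _ H2 (is_RInt_fold_opp f l1 H1)).
Qed.

Lemma is_RInt_fold (f : R -> R) (l : R) :
  is_RInt f (-1) 2 l -> is_RInt (fun x => f x + f (- x) + f (2 - x)) 0 1 l.
Proof.
  intros H. destruct (is_RInt_split f (-1) 2 0 l) as [l1 [l2 [H1 [H2 ->]]]]; [lra | exact H|].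
  pose proof (is_RInt_Rplus _ _ _ _ _ _ (is_RInt_fold_right f l2 H2) (is_RInt_fold_opp f l1 H1))
    as S.
  replace (l1 + l2) with (l2 + l1) by ring.
  apply (is_RInt_Rext _ _ 0 1 _ ltac:(lra)) with (2 := S). intros x _. ring.
Qed.

Lemma is_RInt_antiderivative (F f : R -> R) a b :
  (forall x, is_derive F x (f x)) -> (forall x, continuous f x) ->
  is_RInt f a b (F b - F a).
Proof. intros HF Hf. exact (is_RInt_derive F f a b (fun x _ => HF x) (fun x _ => Hf x)). Qed.

Lemma is_RInt_beta a b d : 0 <= d ->
  is_RInt (fun u => u ^ a / INR (fact a) * ((d - u) ^ b / INR (fact b))) 0 d
    (d ^ (a + b + 1) / INR (fact (a + b + 1))).
Proof.
  intros Hd; revert a; induction b as [|b IH]; intros a.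
  - rewrite Nat.add_0_r, Nat.add_1_r.
    replace (d ^ S a / INR (fact (S a)))
      with (d ^ S a / INR (fact (S a)) - 0 ^ S a / INR (fact (S a)))
      by (rewrite pow_i by lia; unfold Rdiv; ring).
    apply (is_RInt_Rext (fun u => u ^ a / INR (fact a)));
      [exact Hd | intros; simpl; field; apply INR_fact_neq_0|].
    apply (is_RInt_antiderivative (fun y => y ^ S a / INR (fact (S a))));
      [apply is_derive_pow_fact|].
    intros x. apply (ex_derive_continuous (K := R_AbsRing) (V := R_NormedModule)).
    auto_derive. exact I.
  - set (F := fun y => y ^ S a / INR (fact (S a)) * ((d - y) ^ S b / INR (fact (S b)))).
    set (G := fun y => y ^ S a / INR (fact (S a)) * ((d - y) ^ b / INR (fact b))).
    assert (HF : is_RInt (fun u => u ^ a / INR (fact a) * ((d - u) ^ S b / INR (fact (S b)))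
                                   - G u) 0 d (F d - F 0)).
    { apply (is_RInt_antiderivative F).
      - intros x. unfold F, G. auto_derive; [repeat split|].
        match goal with |- @eq _ ?l ?r => change (@eq R l r) end.
        change (match a with 0%nat => 1 | S _ => INR a + 1 end) with (INR (S a)).
        change (match b with 0%nat => 1 | S _ => INR b + 1 end) with (INR (S b)).
        change (fact a + a * fact a)%nat with (fact (S a)).
        change (fact b + b * fact b)%nat with (fact (S b)).
        rewrite !fact_simpl, !mult_INR, !S_INR, <- !tech_pow_Rmult.
        pose proof (INR_fact_lt_0 a). pose proof (INR_fact_lt_0 b).
        pose proof (pos_INR a). pose proof (pos_INR b).
        change (d + - x) with (d - x). field. repeat split; lra.
      - intros x. apply (ex_derive_continuous (K := R_AbsRing) (V := R_NormedModule)).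
        unfold G. auto_derive. repeat split. }
    assert (E : F d - F 0 = 0)
      by (unfold F; rewrite Rminus_diag, !pow_i by lia; unfold Rdiv; ring).
    rewrite E in HF.
    replace (a + S b + 1)%nat with (S a + b + 1)%nat by lia.
    rewrite <- (Rplus_0_l (_ / _)).
    apply (is_RInt_Rext
             (fun u => (u ^ a / INR (fact a) * ((d - u) ^ S b / INR (fact (S b))) - G u) + G u));
      [exact Hd | intros; ring|].
    apply is_RInt_Rplus; [exact HF | apply IH].
Qed.

Lemma is_RInt_tpow_conv_unit a b d A B : A <= 0 -> A <= B -> d <= B ->
  is_RInt (fun u => tpow a u * tpow_open b (d - u)) A B (tpow (a + b + 1) d).
Proof.
  intros HA HAB HB. destruct (Rle_dec d 0) as [Hd|Hd].
  - rewrite tpow_le0 by (lia || lra). apply is_RInt_eq0; [exact HAB|].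
    intros u _. destruct (Rlt_dec u 0).
    + rewrite tpow_lt0 by assumption. ring.
    + rewrite tpow_open_le0 by lra. ring.
  - assert (Hbeta : is_RInt (fun u => tpow a u * tpow_open b (d - u)) 0 d (tpow (a + b + 1) d)).
    { unfold tpow at 2. destruct (Rle_dec 0 d); [|lra].
      apply (is_RInt_Rext _ _ 0 d _ ltac:(lra)) with (2 := is_RInt_beta a b d ltac:(lra)).
      intros u Hu. unfold tpow, tpow_open.
      destruct (Rle_dec 0 u), (Rlt_dec 0 (d - u)); [reflexivity | lra ..]. }
    rewrite <- (Rplus_0_l (tpow _ d)), <- (Rplus_0_r (tpow _ d)).
    apply (is_RInt_Rchasles _ A 0 B); [|apply (is_RInt_Rchasles _ 0 d B); [exact Hbeta|]];
      apply is_RInt_eq0; try lra; intros u Hu.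
    + rewrite tpow_lt0 by lra. ring.
    + rewrite tpow_open_le0 by lra. ring.
Qed.

Lemma is_RInt_tpow_conv a b lam al ga A B :
  0 < lam -> A <= B -> lam * A <= al -> ga <= lam * B ->
  is_RInt (fun x => tpow a (lam * x - al) * tpow_open b (ga - lam * x)) A B
    (/ lam * tpow (a + b + 1) (ga - al)).
Proof.
  intros Hl HAB HA HB.
  assert (H := is_RInt_tpow_conv_unit a b (ga - al) (lam * A + - al) (lam * B + - al)
                 ltac:(lra) ltac:(nra) ltac:(lra)).
  apply is_RInt_comp_lin, (is_RInt_Rmult_l _ _ _ (/ lam)) in H.
  apply (is_RInt_Rext _ _ A B _ HAB) with (2 := H).
  intros x _. change (scal lam ?v) with (lam * v).
  replace (ga - al - (lam * x + - al)) with (ga - lam * x) by ring.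
  replace (lam * x + - al) with (lam * x - al) by ring. field. lra.
Qed.

Lemma is_RInt_bdiff (F : R -> R -> R) (L : R -> R) A B q z :
  (forall k, (k <= q)%nat -> is_RInt (fun x => F x (z - INR k)) A B (L (z - INR k))) ->
  is_RInt (fun x => bdiff q (F x) z) A B (bdiff q L z).
Proof.
  revert z; induction q as [|q IH]; intros z H; simpl.
  - specialize (H O (le_n _)). rewrite Rminus_0_r in H. exact H.
  - apply is_RInt_Rminus; apply IH; intros k Hk.
    + apply H. lia.
    + replace (z - 1 - INR k) with (z - INR (S k)) by (rewrite S_INR; ring). apply H. lia.
Qed.

(* A product of two [q]-th differences is a [q]-th difference in each shift
   separately; integrating shift by shift with [is_RInt_tpow_conv] turns it
   into a [2q]-th difference. *)
Lemma is_RInt_bdiff_conv a b q lam al ga A B :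
  0 < lam -> A <= B -> lam * A <= al -> ga <= lam * B ->
  is_RInt (fun x => bdiff q (tpow a) (lam * x - al) * bdiff q (tpow_open b) (ga - lam * x))
    A B (/ lam * bdiff (q + q) (tpow (a + b + 1)) (ga - al)).
Proof.
  intros Hl HAB HA HB.
  set (F := fun x mu =>
         bdiff q (fun nu => tpow a (mu + lam * x) * tpow_open b (nu + - (lam * x))) ga).
  set (L := fun mu => bdiff q (fun nu => / lam * tpow (a + b + 1) (nu + mu)) ga).
  assert (HL : bdiff q L (- al) = / lam * bdiff (q + q) (tpow (a + b + 1)) (ga - al)).
  { unfold L. rewrite (bdiff_ext q _ (fun mu => / lam * bdiff q (tpow (a + b + 1)) (mu + ga)))
      by (intros; rewrite bdiff_scal, bdiff_shift, Rplus_comm; reflexivity).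
    rewrite bdiff_scal, bdiff_shift, bdiff_bdiff. f_equal. f_equal. ring. }
  rewrite <- HL. apply (is_RInt_Rext (fun x => bdiff q (F x) (- al)) _ _ _ _ HAB).
  { intros x _. unfold F.
    rewrite (bdiff_ext q _
               (fun mu => bdiff q (tpow_open b) (ga - lam * x) * tpow a (mu + lam * x)))
      by (intros; rewrite bdiff_scal, bdiff_shift; apply Rmult_comm).
    rewrite bdiff_scal, bdiff_shift, Rmult_comm. do 2 f_equal; ring. }
  apply is_RInt_bdiff. intros k _. apply is_RInt_bdiff. intros l _.
  pose proof (pos_INR k). pose proof (pos_INR l).
  apply (is_RInt_Rext
           (fun x => tpow a (lam * x - (al + INR k)) * tpow_open b ((ga - INR l) - lam * x))
           _ _ _ _ HAB).
  { intros x _. do 2 f_equal; ring. }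
  replace (ga - INR l + (- al - INR k)) with ((ga - INR l) - (al + INR k)) by ring.
  apply is_RInt_tpow_conv; lra.
Qed.

(** * The Dirichlet basis on (0,1) *)

Lemma Series_two_terms (a : nat -> R) : (forall k, (2 <= k)%nat -> a k = 0) ->
  Series a = a O + a 1%nat.
Proof.
  intros H. apply is_series_unique.
  apply (filterlim_ext_loc (fun _ => a O + a 1%nat)); [|apply filterlim_const].
  exists 1%nat. intros N HN. induction N as [|N IH]; [lia|].
  rewrite sum_Sn. destruct N as [|N].
  - rewrite sum_O. reflexivity.
  - rewrite IH, (H (S (S N))) by lia. exact (eq_sym (Rplus_0_r _)).
Qed.

(* [BDder p n r c] is [(n+1)^(-r)] times the [r]-th derivative of [B^D_c]
   (off the breakpoints when [r = p]). *)
Definition BDder (p n r : nat) (c : Z) (x : R) : R :=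
  spline_diff p (p - r) ((INR n + 1) * x - IZR c + (INR p + 1) / 2).

(* On [(0,1)] only the translates [c = i, -i, 2(n+1) - i] of the periodised
   sum defining [NDir p n i] meet the support. *)
Definition NDir_der (p n r : nat) (c : Z) (x : R) : R :=
  BDder p n r c x - BDder p n r (- c) x - BDder p n r (2 * (Z.of_nat n + 1) - c) x.

Lemma NDir_eq_NDir_der p n i y : (p + 1 <= n)%nat -> (1 <= i <= n)%nat -> 0 < y < 1 ->
  NDir p n i y = NDir_der p n 0 (Z.of_nat i) y.
Proof.
  intros Hn Hi Hy.
  assert (Rn : INR p + 1 <= INR n) by (rewrite <- S_INR; apply le_INR; lia).
  assert (Ri : 1 <= INR i <= INR n) by (split; [apply (le_INR 1) | apply le_INR]; lia).
  assert (Hpos : 0 <= INR p) by apply pos_INR.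
  assert (HBD : forall c, BD p n (IZR c) y = BDder p n 0 c y)
    by (intros; unfold BD, BDder; rewrite cardN_bdiff, Nat.sub_0_r; reflexivity).
  assert (HBD0 : forall c, ((INR n + 1) * y - c + (INR p + 1) / 2 < 0 \/
                            INR (S p) <= (INR n + 1) * y - c + (INR p + 1) / 2) -> BD p n c y = 0)
    by (intros c Hc; unfold BD; rewrite cardN_bdiff; apply spline_diff_out; [lia | exact Hc]).
  assert (Z1 : forall m : Z, m <> 0%Z -> BD p n (INR i + 2 * IZR m * (INR n + 1)) y = 0).
  { intros m Hm. apply HBD0. rewrite S_INR.
    assert (H : (1 <= m)%Z \/ (m <= -1)%Z) by lia.
    destruct H as [H|H]; apply IZR_le in H; [left | right]; simpl in *; nra. }
  assert (Z2 : forall m : Z, m <> 0%Z -> m <> 1%Z ->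
                             BD p n (- INR i + 2 * IZR m * (INR n + 1)) y = 0).
  { intros m Hm Hm1. apply HBD0. rewrite S_INR.
    assert (H : (2 <= m)%Z \/ (m <= -1)%Z) by lia.
    destruct H as [H|H]; apply IZR_le in H; [left | right]; simpl in *; nra. }
  unfold NDir, sumZ. rewrite Series_two_terms.
  - rewrite (Z1 (- Z.of_nat 0 - 1)%Z), (Z2 (- Z.of_nat 0 - 1)%Z), (Z1 (Z.of_nat 1)),
      (Z1 (- Z.of_nat 1 - 1)%Z), (Z2 (- Z.of_nat 1 - 1)%Z) by (simpl; lia).
    unfold NDir_der. rewrite <- !HBD. simpl Z.of_nat.
    rewrite !minus_IZR, opp_IZR, mult_IZR, plus_IZR, <- INR_IZR_INZ, <- INR_IZR_INZ.
    simpl (IZR 0). simpl (IZR 1). simpl (IZR 2).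
    replace (INR i + 2 * 0 * (INR n + 1)) with (INR i) by ring.
    replace (- INR i + 2 * 0 * (INR n + 1)) with (- INR i) by ring.
    replace (- INR i + 2 * 1 * (INR n + 1)) with (2 * (INR n + 1) - INR i) by ring. ring.
  - intros k Hk. rewrite Z1, Z2, Z1, Z2 by lia. ring.
Qed.

(* [x] is not a breakpoint of any [BDder p n r c] with [c : Z]. *)
Definition off_grid (p n : nat) (x : R) : Prop :=
  forall z : Z, (INR n + 1) * x + (INR p + 1) / 2 <> IZR z.

Lemma off_grid_shift p n x c z : off_grid p n x ->
  (INR n + 1) * x - IZR c + (INR p + 1) / 2 <> IZR z.
Proof. intros H E. apply (H (z + c)%Z). rewrite plus_IZR. lra. Qed.

Lemma off_grid_opp p n x : off_grid p n x -> off_grid p n (- x).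
Proof.
  intros H z E. apply (H (Z.of_nat (S p) - z)%Z).
  rewrite minus_IZR, <- INR_IZR_INZ, S_INR. lra.
Qed.

Lemma off_grid_two_sub p n x : off_grid p n x -> off_grid p n (2 - x).
Proof.
  intros H z E. apply (H (2 * Z.of_nat (S n) + Z.of_nat (S p) - z)%Z).
  rewrite minus_IZR, plus_IZR, mult_IZR, <- !INR_IZR_INZ, !S_INR. simpl (IZR 2). lra.
Qed.

Definition grid (p n : nat) : list R :=
  map (fun k => (INR k - (INR p + 1) / 2) / (INR n + 1)) (seq 0 (n + p + 2)).

Lemma off_grid_of_not_In p n x : 0 < x < 1 -> ~ In x (grid p n) -> off_grid p n x.
Proof.
  intros Hx Hn z E. apply Hn, in_map_iff.
  assert (Hl : 0 < INR n + 1) by (pose proof (pos_INR n); lra).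
  assert (Hz : (0 <= z)%Z) by (apply le_IZR; pose proof (pos_INR p); nra).
  exists (Z.to_nat z). split.
  - rewrite INR_IZR_INZ, Z2Nat.id by exact Hz. rewrite <- E. field. lra.
  - apply in_seq. split; [lia|]. apply INR_lt. rewrite INR_IZR_INZ, Z2Nat.id by exact Hz.
    rewrite <- E, !plus_INR. simpl. pose proof (pos_INR p). nra.
Qed.

Lemma is_RInt_off_grid p n (f g : R -> R) (l : R) :
  (forall x, 0 < x < 1 -> off_grid p n x -> g x = f x) ->
  is_RInt f 0 1 l -> is_RInt g 0 1 l.
Proof.
  intros H. apply (is_RInt_except (grid p n)); [lra|].
  intros x Hx Hn. apply H; [exact Hx | exact (off_grid_of_not_In p n x Hx Hn)].
Qed.

Lemma is_derive_BDder p n k c x : (k < p)%nat -> (S k < p)%nat \/ off_grid p n x ->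
  is_derive (BDder p n k c) x ((INR n + 1) * BDder p n (S k) c x).
Proof.
  intros Hk Hc. unfold BDder. replace (p - k)%nat with (S (p - S k)) by lia.
  apply (is_derive_ext (fun y => spline_diff p (S (p - S k))
                                 ((INR n + 1) * y + (- IZR c + (INR p + 1) / 2)))).
  { intros t. f_equal. ring. }
  replace ((INR n + 1) * x - IZR c + (INR p + 1) / 2)
    with ((INR n + 1) * x + (- IZR c + (INR p + 1) / 2)) by ring.
  apply is_derive_spline_diff. destruct Hc as [Hc|Hc]; [left; lia | right].
  intros z. replace ((INR n + 1) * x + (- IZR c + (INR p + 1) / 2))
    with ((INR n + 1) * x - IZR c + (INR p + 1) / 2) by ring.
  apply off_grid_shift, Hc.
Qed.

Lemma is_derive_NDir_der p n k c x : (k < p)%nat -> (S k < p)%nat \/ off_grid p n x ->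
  is_derive (fun y => (INR n + 1) ^ k * NDir_der p n k c y) x
    ((INR n + 1) ^ S k * NDir_der p n (S k) c x).
Proof.
  intros Hk Hc. unfold NDir_der.
  replace ((INR n + 1) ^ S k * _) with ((INR n + 1) ^ k *
    ((INR n + 1) * BDder p n (S k) c x - (INR n + 1) * BDder p n (S k) (- c) x
     - (INR n + 1) * BDder p n (S k) (2 * (Z.of_nat n + 1) - c) x)) by (simpl; ring).
  apply is_derive_scal.
  apply (is_derive_minus (fun y => _ - _)); [apply (is_derive_minus (BDder p n k _))|];
    apply is_derive_BDder; assumption.
Qed.

Lemma Derive_n_NDir p n r i x : (p + 1 <= n)%nat -> (1 <= i <= n)%nat -> (r <= p)%nat ->
  0 < x < 1 -> (r < p)%nat \/ off_grid p n x ->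
  Derive_n (NDir p n i) r x = (INR n + 1) ^ r * NDir_der p n r (Z.of_nat i) x.
Proof.
  intros Hn Hi Hr Hx Hc.
  rewrite (Derive_n_ext_loc _ (NDir_der p n 0 (Z.of_nat i))).
  2:{ apply (locally_open (fun y => 0 < y < 1));
        [|intros; apply NDir_eq_NDir_der; auto | exact Hx].
      apply open_and; [apply open_gt | apply open_lt]. }
  destruct r as [|r]; [simpl; ring|].
  simpl Derive_n.
  rewrite (Derive_ext _ (fun y => (INR n + 1) ^ r * NDir_der p n r (Z.of_nat i) y)).
  - apply is_derive_unique, is_derive_NDir_der; [lia|].
    destruct Hc as [Hc|Hc]; [left; lia | right; exact Hc].
  - intros t.
    apply (Derive_n_chain _ (fun k y => (INR n + 1) ^ k * NDir_der p n k (Z.of_nat i) y) (p - 1));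
      [intros; simpl; ring | | lia].
    intros k y Hk. apply is_derive_NDir_der; [lia | left; lia].
Qed.

(** * Reflection symmetry and Gram entries *)

Lemma pow_m1_double k : (-1) ^ (2 * k) = 1.
Proof. rewrite pow_mult. replace ((-1) ^ 2) with 1 by ring. apply pow1. Qed.

Lemma pow_m1_sub_twice p r : (r <= p)%nat -> (-1) ^ (p + (p - r)) = (-1) ^ r.
Proof.
  intros Hr. replace (p + (p - r))%nat with (r + 2 * (p - r))%nat by lia.
  rewrite pow_add, pow_m1_double. ring.
Qed.

Lemma BDder_reflect p n r c c' x x' : (r <= p)%nat ->
  (forall z : Z, (INR n + 1) * x - IZR c + (INR p + 1) / 2 <> IZR z) ->
  (INR n + 1) * x' - IZR c' + (INR p + 1) / 2
    = INR (S p) - ((INR n + 1) * x - IZR c + (INR p + 1) / 2) ->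
  BDder p n r c' x' = (-1) ^ r * BDder p n r c x.
Proof.
  intros Hr Hu E. unfold BDder. rewrite E, spline_diff_reflect by (lia || exact Hu).
  rewrite pow_m1_sub_twice by exact Hr. reflexivity.
Qed.

Lemma BDder_opp p n r c x : (r <= p)%nat -> off_grid p n x ->
  BDder p n r (- c) x = (-1) ^ r * BDder p n r c (- x).
Proof.
  intros Hr Hx.
  apply BDder_reflect; [exact Hr | intros; apply off_grid_shift, off_grid_opp, Hx |].
  rewrite opp_IZR, S_INR. field.
Qed.

Lemma BDder_two_sub p n r c x : (r <= p)%nat -> off_grid p n x ->
  BDder p n r (2 * (Z.of_nat n + 1) - c) x = (-1) ^ r * BDder p n r c (2 - x).
Proof.
  intros Hr Hx.
  apply BDder_reflect; [exact Hr | intros; apply off_grid_shift, off_grid_two_sub, Hx |].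
  rewrite minus_IZR, mult_IZR, plus_IZR, <- INR_IZR_INZ, S_INR.
  simpl (IZR 2). simpl (IZR 1). field.
Qed.

Lemma BDder_opp_mul_two_sub p n r c d x : (r <= p)%nat -> (p + 1 <= n)%nat ->
  (1 <= c)%Z -> (d <= Z.of_nat n)%Z ->
  BDder p n r (- c) x * BDder p n r (2 * (Z.of_nat n + 1) - d) x = 0.
Proof.
  intros Hr Hn Hc Hd.
  assert (Rn : INR p + 1 <= INR n) by (rewrite <- S_INR; apply le_INR; lia).
  apply IZR_le in Hc, Hd. rewrite <- INR_IZR_INZ in Hd.
  unfold BDder. rewrite opp_IZR, minus_IZR, mult_IZR, plus_IZR, <- INR_IZR_INZ.
  simpl (IZR 2). simpl (IZR 1).
  destruct (Rle_dec (INR (S p)) ((INR n + 1) * x - - IZR c + (INR p + 1) / 2)) as [H|H].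
  - rewrite (spline_diff_out p _ ((INR n + 1) * x - - IZR c + _)); [ring | lia | right; exact H].
  - rewrite (spline_diff_out p _ ((INR n + 1) * x - (2 * (INR n + 1) - IZR d) + _));
      [ring | lia | left].
    rewrite S_INR in H. lra.
Qed.

Definition gram (p r : nat) (u : R) : R :=
  (-1) ^ r * spline_diff (S (2 * p)) (2 * (p - r) + 1) (INR (S p) - u).

Lemma alpha_eq_gram p r k : (r <= p)%nat -> alpha p r k = gram p r (INR k).
Proof.
  intros Hr. unfold alpha, gram. destruct (Nat.leb k p) eqn:E.
  - rewrite Derive_n_cardN by lia.
    replace (2 * p + 1 - 2 * r)%nat with (2 * (p - r) + 1)%nat by lia.
    replace (2 * p + 1)%nat with (S (2 * p)) by lia.
    replace (p + 1)%nat with (S p) by lia. reflexivity.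
  - apply Nat.leb_gt in E. rewrite spline_diff_le0; [ring | lia |].
    assert (INR (S p) <= INR k) by (apply le_INR; lia). lra.
Qed.

Lemma is_RInt_BDder_mul p n r c d A B : (r <= p)%nat -> A <= B ->
  (INR n + 1) * A <= IZR c - (INR p + 1) / 2 -> IZR d + (INR p + 1) / 2 <= (INR n + 1) * B ->
  is_RInt (fun x => BDder p n r c x * BDder p n r d x) A B
    (/ (INR n + 1) * gram p r (IZR c - IZR d)).
Proof.
  intros Hr HAB HA HB.
  assert (Hl : 0 < INR n + 1) by (pose proof (pos_INR n); lra).
  assert (Hs : INR (S p) = 2 * ((INR p + 1) / 2)) by (rewrite S_INR; field).
  assert (H := is_RInt_bdiff_conv (p - r) (p - r) (S p) (INR n + 1)
                 (IZR c - (INR p + 1) / 2) (IZR d + (INR p + 1) / 2) A B Hl HAB HA HB).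
  apply (is_RInt_Rmult_l _ _ _ ((-1) ^ r)) in H.
  replace (/ (INR n + 1) * gram p r (IZR c - IZR d)) with
    ((-1) ^ r * (/ (INR n + 1) * bdiff (S p + S p) (tpow (p - r + (p - r) + 1))
       (IZR d + (INR p + 1) / 2 - (IZR c - (INR p + 1) / 2)))).
  2:{ unfold gram, spline_diff. replace (S p + S p)%nat with (S (S (2 * p))) by lia.
      replace (p - r + (p - r) + 1)%nat with (2 * (p - r) + 1)%nat by lia.
      rewrite Hs. replace (2 * ((INR p + 1) / 2) - (IZR c - IZR d))
        with (IZR d + (INR p + 1) / 2 - (IZR c - (INR p + 1) / 2)) by field. ring. }
  apply (is_RInt_Rext _ _ A B _ HAB) with (2 := H). intros x _.
  unfold BDder, spline_diff.
  rewrite (bdiff_tpow_reflect (S p) (p - r) (_ - IZR d + _)) by lia.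
  replace (S p + (p - r) + 1)%nat with (p + (p - r) + 2)%nat by lia.
  replace (INR (S p) - ((INR n + 1) * x - IZR d + (INR p + 1) / 2))
    with (IZR d + (INR p + 1) / 2 - (INR n + 1) * x) by (rewrite Hs; ring).
  replace ((INR n + 1) * x - IZR c + (INR p + 1) / 2)
    with ((INR n + 1) * x - (IZR c - (INR p + 1) / 2)) by ring.
  replace (p + (p - r) + 2)%nat with (p + (p - r) + 2 * 1)%nat by lia.
  rewrite pow_add, pow_m1_double, pow_m1_sub_twice by exact Hr. ring.
Qed.

Definition BDder_prod (p n r : nat) (c d : Z) (y : R) : R :=
  BDder p n r c y * BDder p n r d y.

(* Reflecting the four translates [-i, -j, 2(n+1) - i, 2(n+1) - j] back onto
   [i] and [j] folds the nine products of [NDir_der i * NDir_der j] into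
   three autocorrelations; the two remaining products vanish identically. *)
Lemma NDir_der_mul_fold p n r c d x :
  (r <= p)%nat -> (p + 1 <= n)%nat ->
  (1 <= c <= Z.of_nat n)%Z -> (1 <= d <= Z.of_nat n)%Z -> off_grid p n x ->
  NDir_der p n r c x * NDir_der p n r d x
  = (BDder_prod p n r c d x + BDder_prod p n r c d (- x) + BDder_prod p n r c d (2 - x))
    - (BDder_prod p n r c (- d) x + BDder_prod p n r c (- d) (- x))
    - (BDder_prod p n r c (2 * (Z.of_nat n + 1) - d) x
       + BDder_prod p n r c (2 * (Z.of_nat n + 1) - d) (2 - x)).
Proof.
  intros Hr Hn Hc Hd Hx.
  assert (Z1 := BDder_opp_mul_two_sub p n r c d x Hr Hn ltac:(lia) ltac:(lia)).
  assert (Z2 := BDder_opp_mul_two_sub p n r d c x Hr Hn ltac:(lia) ltac:(lia)).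
  assert (Hs : (-1) ^ r * (-1) ^ r = 1)
    by (rewrite <- pow_add, <- pow_m1_double with r; f_equal; lia).
  unfold NDir_der, BDder_prod.
  rewrite !(BDder_opp p n r _ x), !(BDder_two_sub p n r _ x) in * by assumption.
  rewrite (BDder_opp p n r d (- x)), (BDder_two_sub p n r d (2 - x))
    by (assumption || apply off_grid_opp || apply off_grid_two_sub; assumption).
  rewrite Ropp_involutive. replace (2 - (2 - x)) with x by ring.
  set (s := (-1) ^ r) in *.
  set (a0 := BDder p n r c x) in *. set (a1 := BDder p n r c (- x)) in *.
  set (a2 := BDder p n r c (2 - x)) in *.
  set (b0 := BDder p n r d x) in *. set (b1 := BDder p n r d (- x)) in *.
  set (b2 := BDder p n r d (2 - x)) in *.
  transitivity (a0 * b0 + s * s * (a1 * b1 + a2 * b2) - s * (a0 * b1 + a1 * b0)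
                - s * (a0 * b2 + a2 * b0) + s * a1 * (s * b2) + s * b1 * (s * a2)); [ring|].
  rewrite Z1, Z2, Hs. ring.
Qed.

Lemma is_RInt_BDder_prod p n r c d A B (l : R) : A <= B ->
  is_RInt (BDder_prod p n r d c) A B l -> is_RInt (BDder_prod p n r c d) A B l.
Proof.
  intros HAB. apply (is_RInt_Rext _ _ A B _ HAB). intros x _. apply Rmult_comm.
Qed.

Lemma is_RInt_NDir_der_mul p n r i j :
  (r <= p)%nat -> (p + 1 <= n)%nat -> (1 <= i <= n)%nat -> (1 <= j <= n)%nat ->
  is_RInt (fun x => NDir_der p n r (Z.of_nat i) x * NDir_der p n r (Z.of_nat j) x) 0 1
    (/ (INR n + 1) * (gram p r (INR ((i - j) + (j - i))) - gram p r (INR (i + j))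
                       - gram p r (INR (2 * n + 2 - i - j)))).
Proof.
  intros Hr Hn Hi Hj.
  assert (Rn : INR p + 1 <= INR n) by (rewrite <- S_INR; apply le_INR; lia).
  assert (Ri : 1 <= INR i <= INR n) by (split; [apply (le_INR 1) | apply le_INR]; lia).
  assert (Rj : 1 <= INR j <= INR n) by (split; [apply (le_INR 1) | apply le_INR]; lia).
  assert (Rp : 0 <= INR p) by apply pos_INR.
  apply (is_RInt_off_grid p n _ _ _ (fun x _ Hx =>
    NDir_der_mul_fold p n r (Z.of_nat i) (Z.of_nat j) x Hr Hn ltac:(lia) ltac:(lia) Hx)).
  rewrite !Rmult_minus_distr_l.
  apply is_RInt_Rminus; [apply is_RInt_Rminus|].
  - apply (is_RInt_fold (BDder_prod p n r (Z.of_nat i) (Z.of_nat j))).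
    destruct (le_lt_dec j i) as [Hij|Hij].
    + replace (INR ((i - j) + (j - i))) with (IZR (Z.of_nat i) - IZR (Z.of_nat j))
        by (rewrite <- !INR_IZR_INZ, <- minus_INR by lia; f_equal; lia).
      apply is_RInt_BDder_mul; [exact Hr | lra | ..]; rewrite <- INR_IZR_INZ; lra.
    + replace (INR ((i - j) + (j - i))) with (IZR (Z.of_nat j) - IZR (Z.of_nat i))
        by (rewrite <- !INR_IZR_INZ, <- minus_INR by lia; f_equal; lia).
      apply is_RInt_BDder_prod; [lra|].
      apply is_RInt_BDder_mul; [exact Hr | lra | ..]; rewrite <- INR_IZR_INZ; lra.
  - apply (is_RInt_fold_left (BDder_prod p n r (Z.of_nat i) (- Z.of_nat j))).
    replace (INR (i + j)) with (IZR (Z.of_nat i) - IZR (- Z.of_nat j))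
      by (rewrite opp_IZR, <- !INR_IZR_INZ, plus_INR; ring).
    apply is_RInt_BDder_mul; [exact Hr | lra | ..];
      rewrite ?opp_IZR, <- INR_IZR_INZ; lra.
  - apply (is_RInt_fold_right
             (BDder_prod p n r (Z.of_nat i) (2 * (Z.of_nat n + 1) - Z.of_nat j))).
    replace (INR (2 * n + 2 - i - j))
      with (IZR (2 * (Z.of_nat n + 1) - Z.of_nat j) - IZR (Z.of_nat i))
      by (rewrite !minus_IZR, mult_IZR, plus_IZR, <- !INR_IZR_INZ, !minus_INR, plus_INR,
            mult_INR by lia; simpl; ring).
    apply is_RInt_BDder_prod; [lra|].
    apply is_RInt_BDder_mul; [exact Hr | lra | ..];
      rewrite ?minus_IZR, ?mult_IZR, ?plus_IZR, <- !INR_IZR_INZ; simpl (IZR _); lra.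
Qed.

Lemma Xmat_eq_gram p n r i j :
  (r <= p)%nat -> (p + 1 <= n)%nat -> (1 <= i <= n)%nat -> (1 <= j <= n)%nat ->
  Xmat p r n i j = (INR n + 1) ^ r * (INR n + 1) ^ r *
    (/ (INR n + 1) * (gram p r (INR ((i - j) + (j - i))) - gram p r (INR (i + j))
                       - gram p r (INR (2 * n + 2 - i - j)))).
Proof.
  intros Hr Hn Hi Hj. unfold Xmat. apply is_RInt_unique.
  apply (is_RInt_off_grid p n
           (fun x => (INR n + 1) ^ r * (INR n + 1) ^ r
                     * (NDir_der p n r (Z.of_nat i) x * NDir_der p n r (Z.of_nat j) x))).
  - intros x Hx Hg. rewrite !Derive_n_NDir by (auto; right; exact Hg). ring.
  - apply is_RInt_Rmult_l, is_RInt_NDir_der_mul; assumption.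
Qed.

Lemma powerRZ_double_pred x r : 0 < x ->
  powerRZ x (2 * Z.of_nat r - 1) = x ^ r * x ^ r * / x.
Proof.
  intros H. replace (2 * Z.of_nat r - 1)%Z with (Z.of_nat (r + r) + (-1))%Z by lia.
  rewrite powerRZ_add, <- pow_powerRZ, pow_add by lra. simpl. field. lra.
Qed.

Theorem mainTheorem3 (p n r : nat) :
  (1 <= p)%nat -> (1 <= n)%nat -> (r <= p)%nat ->
  (Nat.max (p + 1) (p + p / 2 - 1) <= n)%nat ->
  forall i j : nat, (1 <= i <= n)%nat -> (1 <= j <= n)%nat ->
    Xmat p r n i j
    = powerRZ (INR n + 1) (2 * Z.of_nat r - 1)
      * (Tmat p r i j - Hmat p r n i j).
Proof.
  intros _ _ Hr Hmax i j Hi Hj.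
  assert (Hn : (p + 1 <= n)%nat) by lia.
  assert (Hl : 0 < INR n + 1) by (pose proof (pos_INR n); lra).
  rewrite Xmat_eq_gram, powerRZ_double_pred by assumption.
  unfold Tmat, Hmat. rewrite !alpha_eq_gram by exact Hr.
  field. lra.
Qed.
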